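(* Let $n\ge1$, $r\ge1$, let $R,D\subseteq\{1,\dots,n-1\}$ and $\sigma\in S_n$. Then $$(q_r;q_r)_n\sum_{\substack{Z\in(\mathbb{N}^r)^n\\ \sigma_R(Z)=\sigma}} q^Z\,\chi\!\left(\mathrm{Des}_{R,Z^{(2)}}(\sigma)=D\right)=q_r^{c(D)}\sum_{\substack{S\in(\mathbb{N}^{r-1})^n\\ \mathrm{Des}_{R,S}(\sigma)=D}} q^S,$$ where $c(D)=\sum_{i\in D}(n-i)$.
   Context: $\mathbb{N}=\{0,1,\dots\}$; sequences in $\mathbb{N}^r$ are compared lexicographically (first differing coordinate decides). $(q;t)_r=(1-q)(1-qt)\cdots(1-qt^{r-1})$; $\chi(A)$ is $1$ if $A$ holds and $0$ otherwise. For $R\subseteq\{1,\dots,n-1\}$ and distinct $a,b\in\{1,\dots,n\}$, write $a\sim_R b$ if all of $\min(a,b),\dots,\max(a,b)-1$ lie in $R$. For $S=(s^1,\dots,s^n)\in(\mathbb{N}^r)^n$, the reading order on indices: $i$ is read before $j$ if $s^i<s^j$, or if $s^i=s^j$ and either ($i<j$ and not $i\sim_R j$) or ($i>j$ and $i\sim_R j$); $\sigma_R(S)\in S_n$ is the permutation $\sigma_1\cdots\sigma_n$ listing the indices in this reading order. For $Z=(z^1,\dots,z^n)\in(\mathbb{N}^r)^n$ with $z^j=(z^j_1,\dots,z^j_r)$, $q^Z=\prod_{i=1}^r q_{r-i+1}^{z^1_i+\cdots+z^n_i}$, and $Z^{(2)}\in(\mathbb{N}^{r-1})^n$ is obtained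 by deleting the first coordinate of every $z^j$. For $S=(s^1,\dots,s^n)\in(\mathbb{N}^{r'})^n$ (if $r'=0$, all $s^i$ are empty and equal) and $\sigma\in S_n$, $\mathrm{Des}_{R,S}(\sigma)$ is the set of $i\in\{1,\dots,n-1\}$ with either $s^{\sigma_i}>s^{\sigma_{i+1}}$, or $s^{\sigma_i}=s^{\sigma_{i+1}}$ and either ($\sigma_{i+1}<\sigma_i$ and not $\sigma_{i+1}\sim_R\sigma_i$) or ($\sigma_{i+1}>\sigma_i$ and $\sigma_i\sim_R\sigma_{i+1}$). *)

From HB Require Import structures.
From mathcomp Require Import all_boot all_order all_algebra all_fingroup.
Set Implicit Arguments. Unset Strict Implicit. Unset Printing Implicit Defensive.
Import GRing.Theory.
Local Open Scope nat_scope.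

(* Conventions.
   - Indices 1..n are represented by i : 'I_n, standing for i.+1.
   - R, D subsets of {1,..,n-1} are represented by {set 'I_n} whose elements
     (as naturals) are the members; the hypothesis "every element is > 0"
     expresses R, D ⊆ {1,..,n-1}.
   - A vector of N^r' is a seq nat of size r'; a family S = (s^1,...,s^n)
     is a function 'I_n -> seq nat (s^(i+1) = S i).
   - Formal power series in q_1,...,q_r with integer coefficients are
     represented by their coefficient functions: a monomial
     q_1^(e 1) ... q_r^(e r) is given by e : nat -> nat (only the values at
     1..r matter). *)

Definition inR n (R : {set 'I_n}) (k : nat) : bool :=
  [exists i : 'I_n, (val i == k) && (i \in R)].

Definition simR n (R : {set 'I_n}) (a b : nat) : bool :=
  (a != b) && all (inR R) (iota (minn a b) (maxn a b - minn a b)).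

Fixpoint lexlt (s t : seq nat) : bool :=
  match s, t with
  | x :: s', y :: t' => (x < y) || ((x == y) && lexlt s' t')
  | _, _ => false
  end.

Definition read_before n (R : {set 'I_n}) (S : 'I_n -> seq nat) (i j : 'I_n) : bool :=
  lexlt (S i) (S j) ||
  ((S i == S j) &&
   (((i < j) && ~~ simR R i.+1 j.+1) || ((j < i) && simR R i.+1 j.+1))).

(* sigma_R(S) = sigma : the word sigma_1 ... sigma_n lists the indices
   in reading order *)
Definition reading_perm_is n (R : {set 'I_n}) (S : 'I_n -> seq nat)
    (sigma : {perm 'I_n}) : bool :=
  sorted (read_before R S) [seq sigma i | i <- enum 'I_n].

Definition prev_ord n (p : 'I_n) : 'I_n :=
  Ordinal (leq_ltn_trans (leq_pred p) (ltn_ord p)).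

(* Des_{R,S}(sigma) ⊆ {1..n-1}; position p (1 <= p <= n-1) is the ordinal
   p : 'I_n, with sigma_p = sigma (p-1) and sigma_{p+1} = sigma p. *)
Definition Des n (R : {set 'I_n}) (S : 'I_n -> seq nat) (sigma : {perm 'I_n})
    : {set 'I_n} :=
  [set p : 'I_n | (0 < p) &&
     (let a := sigma (prev_ord p) in let b := sigma p in
      lexlt (S b) (S a) ||
      ((S a == S b) &&
       (((b < a) && ~~ simR R a.+1 b.+1) || ((a < b) && simR R a.+1 b.+1))))].

Definition Zdrop2 n (Z : 'I_n -> seq nat) : 'I_n -> seq nat :=
  fun j => behead (Z j).

(* exponent of q_v in q^Z for Z in (N^r')^n:  q^Z = prod_{i=1}^{r'}
   q_{r'-i+1}^{z^1_i+...+z^n_i}, so q_v gets the (r'-v+1)-th coordinate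
   (0-based index r'-v); q_v does not occur if v = 0 or v > r'. *)
Definition wt n (r' : nat) (Z : 'I_n -> seq nat) (v : nat) : nat :=
  if (1 <= v <= r') then \sum_(j < n) nth 0 (Z j) (r' - v) else 0.

Definition series := (nat -> nat) -> int.

(* Coefficient of the monomial e (in variables q_1..q_r) of the generating
   function  sum_{Z in (N^r')^n, P Z} q^Z.  Every Z contributing to this
   coefficient has all entries <= B := e 1 + ... + e r, so the count is over
   the finite set of families with entries in {0..B}. *)
Definition gf (r n r' : nat) (P : ('I_n -> seq nat) -> bool) : series :=
  fun e =>
    let B := (\sum_(1 <= v < r.+1) e v)%N in
    (#|[pred Z : {ffun 'I_n -> {ffun 'I_r' -> 'I_B.+1}} |
        let Zn := fun j => [seq val (Z j k) | k <- enum 'I_r'] in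
        P Zn && [forall v : 'I_r, wt r' Zn v.+1 == e v.+1]]|)%:Z%R.

Definition upd (e : nat -> nat) (k m : nat) : nat -> nat :=
  fun j => if j == k then m else e j.

(* product of a polynomial p(q_k) in the single variable q_k with F *)
Definition mul_poly_var (k : nat) (p : {poly int}) (F : series) : series :=
  fun e => (\sum_(m < (e k).+1) p`_m * F (upd e k (e k - m)))%R.

Definition mul_mono_var (k c : nat) (F : series) : series :=
  fun e => if (c <= e k)%N then F (upd e k (e k - c)) else 0%R.

Definition qpoch (n : nat) : {poly int} := (\prod_(i < n) (1 - 'X^(i.+1)) : {poly int})%R.

Definition cD n (D : {set 'I_n}) : nat := (\sum_(i in D) (n - i))%N.

From HB Require Import structures.
From mathcomp Require Import all_boot all_order all_algebra all_fingroup.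
From mathcomp Require Import zify.
From Stdlib Require Import FunctionalExtensionality.
Set Implicit Arguments. Unset Strict Implicit. Unset Printing Implicit Defensive.
Import GRing.Theory.
Local Open Scope nat_scope.

(* Write each vector z^j of Z as its first coordinate x_j, the exponent of q_r, followed
   by its tail, the j-th vector of Z^(2).  Comparing words first by x and then by the
   tails shows that, once Des_{R,Z^(2)}(sigma) = D, the reading order of Z is sigma
   exactly when x_{sigma_1} <= ... <= x_{sigma_n} with strict steps at the positions
   in D.  The left-hand sum therefore factors into the right-hand sum without
   q_r^{c(D)}, times the generating function of such sequences x.  Their successive
   differences, less one at each position in D, are free: this turns them into
   q_r^{c(D)} times the partitions with parts at most n, whose generating function
   (q_r;q_r)_n inverts.  Coefficientwise, every count is taken in a box that holds all
   of its solutions, and the inversion is read off from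
   (q;q)_n * prod_i (1 + q^(n-i) + ... + q^((n-i)B)) = prod_i (1 - q^((n-i)(B+1))). *)

Lemma card_in_bij (A B : finType) (PA : pred A) (PB : pred B) (f : A -> B) (g : B -> A) :
  (forall a, PA a -> PB (f a)) -> (forall b, PB b -> PA (g b)) ->
  (forall a, PA a -> g (f a) = a) -> (forall b, PB b -> f (g b) = b) ->
  #|[pred a | PA a]| = #|[pred b | PB b]|.
Proof.
move=> fP gP fK gK.
rewrite -(card_in_imset (f := f) (D := [pred a | PA a])); last first.
  by move=> a1 a2 /fK {2}<- /fK {2}<- ->.
apply: eq_card => b; rewrite inE; apply/imsetP/idP => [[a aP ->]|bP].
  exact: fP.
by exists (g b); rewrite ?gK ?inE ?gP.
Qed.

Lemma leq_term_sum (I : finType) (F : I -> nat) i : F i <= \sum_j F j.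
Proof. by rewrite (bigD1 i) //= leq_addr. Qed.

Lemma leq_term_sum_nat (F : nat -> nat) a b k : a <= k < b -> F k <= \sum_(a <= i < b) F i.
Proof. by move=> k_in; rewrite (bigD1_seq k) ?mem_index_iota ?iota_uniq //= leq_addr. Qed.

Definition card_box (I : finType) (B : nat) (Q : (I -> nat) -> bool) : nat :=
  #|[pred f : {ffun I -> 'I_B.+1} | Q (fun i => val (f i))]|.

Lemma ffun_inordK (I : finType) K (h : I -> nat) :
  (forall i, h i <= K) -> (fun i => val ([ffun i => inord (h i)] i : 'I_K.+1)) = h.
Proof.
by move=> le_h_K; apply: functional_extensionality => i; rewrite ffunE /= inordK ?ltnS.
Qed.

Lemma ffun_ord_inj (I : finType) K (f1 f2 : {ffun I -> 'I_K}) :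
  (fun i => val (f1 i)) = (fun i => val (f2 i)) -> f1 = f2.
Proof. by move=> eq_f; apply/ffunP => i; apply: val_inj; exact: (congr1 (@^~ i) eq_f). Qed.

Section CardBoxBij.

Variables (I J : finType) (K L : nat).
Variables (QI : (I -> nat) -> bool) (QJ : (J -> nat) -> bool).
Variables (f : (I -> nat) -> J -> nat) (g : (J -> nat) -> I -> nat).
Hypothesis fQ : forall x, (forall i, x i <= K) -> QI x -> QJ (f x) /\ forall j, f x j <= L.
Hypothesis gQ : forall y, (forall j, y j <= L) -> QJ y -> QI (g y) /\ forall i, g y i <= K.
Hypothesis fK : forall x, (forall i, x i <= K) -> QI x -> g (f x) = x.
Hypothesis gK : forall y, (forall j, y j <= L) -> QJ y -> f (g y) = y.

Lemma card_box_bij : card_box K QI = card_box L QJ.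
Proof.
have boxK (a : {ffun I -> 'I_K.+1}) i : val (a i) <= K by rewrite -ltnS ltn_ord.
have boxL (b : {ffun J -> 'I_L.+1}) j : val (b j) <= L by rewrite -ltnS ltn_ord.
pose F (a : {ffun I -> 'I_K.+1}) : {ffun J -> 'I_L.+1} :=
  [ffun j => inord (f (fun i => val (a i)) j)].
pose G (b : {ffun J -> 'I_L.+1}) : {ffun I -> 'I_K.+1} :=
  [ffun i => inord (g (fun j => val (b j)) i)].
have FE (a : {ffun I -> 'I_K.+1}) :
    QI (fun i => val (a i)) -> (fun j => val (F a j)) = f (fun i => val (a i)).
  by move=> Qa; rewrite ffun_inordK //; case: (fQ (boxK a) Qa).
have GE (b : {ffun J -> 'I_L.+1}) :
    QJ (fun j => val (b j)) -> (fun i => val (G b i)) = g (fun j => val (b j)).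
  by move=> Qb; rewrite ffun_inordK //; case: (gQ (boxL b) Qb).
apply: (card_in_bij (f := F) (g := G)).
- by move=> a Qa; rewrite FE //; case: (fQ (boxK a) Qa).
- by move=> b Qb; rewrite GE //; case: (gQ (boxL b) Qb).
- move=> a Qa; apply: ffun_ord_inj; rewrite GE FE ?fK //.
  by case: (fQ (boxK a) Qa).
- move=> b Qb; apply: ffun_ord_inj; rewrite FE GE ?gK //.
  by case: (gQ (boxL b) Qb).
Qed.

End CardBoxBij.

Lemma card_box_widen (I : finType) (Q : (I -> nat) -> bool) M B :
  M <= B -> (forall x, Q x -> forall i, x i <= M) -> card_box B Q = card_box M Q.
Proof.
move=> leMB Qbound; apply: (card_box_bij (f := id) (g := id)) => // x.
  by move=> _ Qx; split; [|exact: Qbound].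
by move=> x_le Qx; split=> // i; exact: leq_trans (x_le i) leMB.
Qed.

Lemma card_box_perm (I : finType) (s : {perm I}) (Q : (I -> nat) -> bool) B :
  card_box B (fun x => Q (fun i => x (s i))) = card_box B Q.
Proof.
have sK (y : I -> nat) : (fun i => y (s^-1 (s i))%g) = y.
  by apply: functional_extensionality => i; rewrite permK.
have sKV (x : I -> nat) : (fun i => x (s (s^-1 i)%g)) = x.
  by apply: functional_extensionality => i; rewrite permKV.
apply: (card_box_bij (f := fun x i => x (s i)) (g := fun y i => y (s^-1 i)%g)).
- by move=> x x_le Qx; split=> // j.
- by move=> y y_le Qy; rewrite /= sK; split=> // i.
- by move=> x _ _; exact: sKV.
- by move=> y _ _; exact: sK.
Qed.

(** * Reading order and descents *)

Definition ascending n (D : {set 'I_n}) (a : 'I_n -> nat) : bool :=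
  [forall p : 'I_n, (0 < p) ==> (a (prev_ord p) + (p \in D) <= a p)].

Lemma lexlt_total s t : size s = size t -> lexlt s t = ~~ lexlt t s && (s != t).
Proof.
elim: s t => [|x s IHs] [|y t] //= [eq_size].
by rewrite IHs // eqseq_cons; case: (ltngtP x y).
Qed.

Lemma lexltnn s : lexlt s s = false.
Proof. by rewrite [LHS](lexlt_total (erefl _)) eqxx andbF. Qed.

Lemma read_before_cons n (R : {set 'I_n}) (x : 'I_n -> nat) (T : 'I_n -> seq nat) a b :
  read_before R (fun j => x j :: T j) a b =
  (x a < x b) || (x a == x b) && read_before R T a b.
Proof.
rewrite /read_before /= eqseq_cons.
by case: (x a < x b); case: (x a == x b); rewrite /= ?orbA.
Qed.

Lemma read_before_Des n (R : {set 'I_n}) (S : 'I_n -> seq nat) (sigma : {perm 'I_n})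
    (p : 'I_n) :
  (forall i j, size (S i) = size (S j)) -> 0 < p ->
  read_before R S (sigma (prev_ord p)) (sigma p) = (p \notin Des R S sigma).
Proof.
move=> Ssize p_gt0; rewrite inE p_gt0 /=.
set a := sigma (prev_ord p); set b := sigma p.
have a_neq_b : a != b by rewrite (inj_eq perm_inj) -val_eqE /=; lia.
rewrite /read_before (lexlt_total (Ssize a b)).
case: eqP => [<-|_] /=; last by rewrite andbT !orbF.
rewrite lexltnn /=.
by case: (ltngtP a b) a_neq_b => [||/val_inj ->]; rewrite ?eqxx //=; case: simR.
Qed.

Lemma sorted_map_enum_ord n (T : Type) (e : rel T) (f : 'I_n -> T) :
  sorted e [seq f i | i <- enum 'I_n] =
  [forall p : 'I_n, (0 < p) ==> e (f (prev_ord p)) (f p)].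
Proof.
rewrite sorted_map; case: n f => [|n] f.
  by rewrite enum_ord0; apply/esym/forallP => -[].
have nthE i (lt_i_n : i < n.+1) : nth ord0 (enum 'I_n.+1) i = Ordinal lt_i_n.
  by apply: val_inj; rewrite /= nth_enum_ord.
apply/(sortedP ord0)/forallP => [adj p | adj i].
  apply/implyP => p_gt0; have := adj (prev_ord p).
  rewrite size_enum_ord /= prednK // ltn_ord -[p.-1]/(nat_of_ord (prev_ord p)).
  by rewrite !nth_ord_enum; apply.
rewrite size_enum_ord => lt_i1_n; rewrite (nthE _ lt_i1_n) (nthE _ (ltnW lt_i1_n)).
have := implyP (adj (Ordinal lt_i1_n)) isT.
by congr (e (f _) _); apply: val_inj.
Qed.

Lemma reading_perm_cons n (R : {set 'I_n}) (x : 'I_n -> nat) (T : 'I_n -> seq nat)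
    (sigma : {perm 'I_n}) :
  (forall i j, size (T i) = size (T j)) ->
  reading_perm_is R (fun j => x j :: T j) sigma =
  ascending (Des R T sigma) (fun p => x (sigma p)).
Proof.
move=> Tsize; rewrite /reading_perm_is sorted_map_enum_ord; apply: eq_forallb => p.
case: (posnP p) => [//|p_gt0].
rewrite /= read_before_cons read_before_Des //.
by case: (_ \in _); rewrite ?andbF ?andbT ?orbF ?addn1 ?addn0 // orbC -leq_eqVlt.
Qed.

Lemma reading_perm_Des n (R D : {set 'I_n}) (sigma : {perm 'I_n}) r'
    (Z : 'I_n -> seq nat) :
  (forall j, size (Z j) = r'.+1) ->
  reading_perm_is R Z sigma && (Des R (Zdrop2 Z) sigma == D) =
  ascending D (fun p => head 0 (Z (sigma p))) && (Des R (Zdrop2 Z) sigma == D).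
Proof.
move=> Zsize; have Z_cons : Z = fun j => head 0 (Z j) :: Zdrop2 Z j.
  by apply: functional_extensionality => j; rewrite /Zdrop2; case: (Z j) (Zsize j).
rewrite {1}Z_cons reading_perm_cons; first by case: eqP => [->|_]; rewrite ?andbF.
by move=> i j; rewrite !size_behead !Zsize.
Qed.

(** * Splitting off the first coordinate *)

Lemma wt_behead n r' (Z : 'I_n -> seq nat) v :
  v < r' -> wt r'.+1 Z v.+1 = wt r' (Zdrop2 Z) v.+1.
Proof.
move=> lt_v_r; rewrite /wt /= ltnS (ltnW lt_v_r) lt_v_r subSS.
by apply: eq_bigr => j _; rewrite nth_behead -subSn.
Qed.

Lemma wt_last n r' (Z : 'I_n -> seq nat) : wt r'.+1 Z r'.+1 = \sum_j head 0 (Z j).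
Proof. by rewrite /wt leqnn subnn; apply: eq_bigr => j _; rewrite nth0. Qed.

Lemma wt_out n r' (Z : 'I_n -> seq nat) : wt r' Z r'.+1 = 0.
Proof. by rewrite /wt ltnn andbF. Qed.

Lemma wt_bound n r' (Z : 'I_n -> seq nat) e :
  [forall v : 'I_r', wt r' Z v.+1 == e v.+1] ->
  forall j i, i < r' -> nth 0 (Z j) i <= \sum_(1 <= v < r'.+1) e v.
Proof.
move=> /forallP Zwt j i lt_i_r.
have lt_v_r : r' - i.+1 < r' by lia.
have := eqP (Zwt (Ordinal lt_v_r)); rewrite /wt /= lt_v_r.
rewrite (_ : r' - (r' - i.+1).+1 = i) => [wt_v|]; last by lia.
apply: (leq_trans _ (leq_term_sum_nat e (k := (r' - i.+1).+1) _)); last by lia.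
by rewrite -wt_v (leq_term_sum (fun j => nth 0 (Z j) i)).
Qed.

Lemma forall_upd_last r' (W e : nat -> nat) c :
  [forall v : 'I_r'.+1, W v.+1 == upd e r'.+1 c v.+1] =
  [forall v : 'I_r', W v.+1 == e v.+1] && (W r'.+1 == c).
Proof.
apply/forallP/andP => [Wv|[/forallP Wv Wlast] v].
  split; last by have := Wv ord_max; rewrite /upd eqxx.
  by apply/forallP => v; have := Wv (widen_ord (leqnSn _) v);
    rewrite /upd /= eqSS (ltn_eqF (ltn_ord v)).
rewrite /upd eqSS; have [lt_v_r|le_r_v] := ltnP v r'.
  by rewrite (ltn_eqF lt_v_r); exact: (Wv (Ordinal lt_v_r)).
have v_r : nat_of_ord v = r' by apply/eqP; rewrite eqn_leq le_r_v -ltnS ltn_ord.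
by rewrite v_r eqxx.
Qed.

Lemma sum_upd_last r' (e : nat -> nat) c :
  \sum_(1 <= v < r'.+2) upd e r'.+1 c v = \sum_(1 <= v < r'.+1) e v + c.
Proof.
rewrite big_nat_recr //= /upd eqxx; congr (_ + _).
by apply: eq_big_nat => v /andP [_ lt_v_r]; rewrite ltn_eqF.
Qed.

Definition family_seqs n r' B (Z : {ffun 'I_n -> {ffun 'I_r' -> 'I_B.+1}}) :
    'I_n -> seq nat :=
  fun j => [seq val (Z j k) | k <- enum 'I_r'].

Definition family_count n r' B (P : ('I_n -> seq nat) -> bool) (e : nat -> nat) : nat :=
  #|[pred Z : {ffun 'I_n -> {ffun 'I_r' -> 'I_B.+1}} |
     P (family_seqs Z) && [forall v : 'I_r', wt r' (family_seqs Z) v.+1 == e v.+1]]|.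

Lemma gfE n r' (P : ('I_n -> seq nat) -> bool) e :
  gf r' r' P e = (family_count r' (\sum_(1 <= v < r'.+1) e v) P e)%:Z%R.
Proof. by []. Qed.

Lemma family_count_widen n r' B (P : ('I_n -> seq nat) -> bool) e :
  \sum_(1 <= v < r'.+1) e v <= B ->
  family_count r' B P e = family_count r' (\sum_(1 <= v < r'.+1) e v) P e.
Proof.
set M := \sum_(1 <= v < r'.+1) e v => leMB; have leMB1 : M.+1 <= B.+1 by [].
pose widen (Z : {ffun 'I_n -> {ffun 'I_r' -> 'I_M.+1}}) :
    {ffun 'I_n -> {ffun 'I_r' -> 'I_B.+1}} :=
  [ffun j => [ffun i => widen_ord leMB1 (Z j i)]].
pose narrow (Z : {ffun 'I_n -> {ffun 'I_r' -> 'I_B.+1}}) :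
    {ffun 'I_n -> {ffun 'I_r' -> 'I_M.+1}} :=
  [ffun j => [ffun i => inord (Z j i)]].
have widenE Z : family_seqs (widen Z) = family_seqs Z.
  by apply: functional_extensionality => j; apply: eq_map => i; rewrite !ffunE.
have Zbound (Z : {ffun 'I_n -> {ffun 'I_r' -> 'I_B.+1}}) :
    [forall v : 'I_r', wt r' (family_seqs Z) v.+1 == e v.+1] ->
    forall j i, val (Z j i) <= M.
  move=> Zwt j i; have := wt_bound Zwt j (ltn_ord i).
  by rewrite /family_seqs (nth_map i) ?size_enum_ord // nth_ord_enum.
have narrowE (Z : {ffun 'I_n -> {ffun 'I_r' -> 'I_B.+1}}) :
    [forall v : 'I_r', wt r' (family_seqs Z) v.+1 == e v.+1] ->
    family_seqs (narrow Z) = family_seqs Z.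
  move=> Zwt; apply: functional_extensionality => j; apply: eq_map => i.
  by rewrite !ffunE /= inordK // ltnS Zbound.
rewrite /family_count; symmetry; apply: (card_in_bij (f := widen) (g := narrow)).
- by move=> Z; rewrite widenE.
- by move=> Z /andP [PZ Zwt]; rewrite narrowE ?PZ.
- move=> Z _; apply/ffunP => j; apply/ffunP => i; apply: val_inj.
  by rewrite !ffunE /= inordK.
- move=> Z /andP [_ Zwt]; apply/ffunP => j; apply/ffunP => i; apply: val_inj.
  by rewrite !ffunE /= inordK // ltnS Zbound.
Qed.

Lemma eq_gf r n r' (P P' : ('I_n -> seq nat) -> bool) :
  (forall Z, (forall j, size (Z j) = r') -> P Z = P' Z) -> gf r r' P =1 gf r r' P'.
Proof.
move=> eqP' e; congr Posz; apply: eq_card => Z; rewrite !inE /= eqP' //.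
by move=> j; rewrite size_map size_enum_ord.
Qed.

Lemma gf_extra_var n r' (P : ('I_n -> seq nat) -> bool) e c :
  gf r'.+1 r' P (upd e r'.+1 c) = if c == 0 then gf r' r' P e else 0%R.
Proof.
rewrite gfE /gf /= sum_upd_last -(family_count_widen P (leq_addr c _)).
case: eqP => [->|/eqP c_neq0]; congr Posz.
  by apply: eq_card => Z; rewrite !inE forall_upd_last wt_out eqxx andbT.
apply: eq_card0 => Z.
by rewrite !inE forall_upd_last wt_out eq_sym (negbTE c_neq0) !andbF.
Qed.

Lemma gf_split_head n r' (A : ('I_n -> nat) -> bool) (P : ('I_n -> seq nat) -> bool) e c :
  gf r'.+1 r'.+1 (fun Z => A (fun j => head 0 (Z j)) && P (Zdrop2 Z)) (upd e r'.+1 c) =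
  ((card_box c (fun x => A x && (\sum_j x j == c)%N))%:Z * gf r' r' P e)%R.
Proof.
rewrite !gfE sum_upd_last -PoszM; congr Posz.
set M := \sum_(1 <= v < r'.+1) e v; set B := M + c.
pose split (Z : {ffun 'I_n -> {ffun 'I_r'.+1 -> 'I_B.+1}}) :
    {ffun 'I_n -> 'I_B.+1} * {ffun 'I_n -> {ffun 'I_r' -> 'I_B.+1}} :=
  ([ffun j => Z j ord0], [ffun j => [ffun i => Z j (lift ord0 i)]]).
pose join (p : {ffun 'I_n -> 'I_B.+1} * {ffun 'I_n -> {ffun 'I_r' -> 'I_B.+1}}) :
    {ffun 'I_n -> {ffun 'I_r'.+1 -> 'I_B.+1}} :=
  [ffun j => [ffun i => if unlift ord0 i is Some i' then p.2 j i' else p.1 j]].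
have split_bij : bijective split.
  exists join.
    move=> Z; apply/ffunP => j; apply/ffunP => i; rewrite /join /split !ffunE.
    by case: unliftP => [i'|] -> //=; exact: ffunE.
  case=> x T; rewrite /join /split; congr pair; apply/ffunP => j.
    by rewrite !ffunE unlift_none.
  by apply/ffunP => i; rewrite !ffunE liftK.
have seqs_split (Z : {ffun 'I_n -> {ffun 'I_r'.+1 -> 'I_B.+1}}) :
    family_seqs Z = fun j => val ((split Z).1 j) :: family_seqs (split Z).2 j.
  apply: functional_extensionality => j.
  rewrite /family_seqs enum_ordSl /= -map_comp !ffunE.
  by congr cons; apply: eq_map => i; rewrite /= !ffunE.
rewrite -(card_box_widen (leq_addl M c)); last first.
  by move=> x /andP [_ /eqP <-] i; exact: leq_term_sum.
rewrite -(family_count_widen P (leq_addr c M)).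
rewrite /card_box /family_count -cardX -(on_card_preimset (onW_bij _ split_bij)).
apply: eq_card => Z; rewrite !inE seqs_split /= forall_upd_last wt_last.
under eq_forallb => v do rewrite (wt_behead _ (ltn_ord v)).
by rewrite /Zdrop2 /= [in LHS](andbC [forall _, _]) andbACA.
Qed.

(** * Ascending sequences and partitions *)

Definition ascending_count n (D : {set 'I_n}) K : nat :=
  card_box K (fun a => ascending D a && (\sum_i a i == K)).

Lemma ascending_count_perm n (D : {set 'I_n}) (s : {perm 'I_n}) K :
  card_box K (fun x => ascending D (fun p => x (s p)) && (\sum_j x j == K)) =
  ascending_count D K.
Proof.
rewrite /ascending_count -[RHS](card_box_perm s); apply: eq_card => x; rewrite !inE.
by rewrite [X in X == K](reindex_inj (@perm_inj _ s)).
Qed.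

Definition cumsum n (D : {set 'I_n}) (b : 'I_n -> nat) (p : 'I_n) : nat :=
  \sum_(i : 'I_n | i <= p) (b i + (i \in D)).

Definition gaps n (D : {set 'I_n}) (a : 'I_n -> nat) (p : 'I_n) : nat :=
  a p - (if 0 < p then a (prev_ord p) else 0) - (p \in D).

Lemma cumsum_first n (D : {set 'I_n}) b (p : 'I_n) :
  val p = 0 -> cumsum D b p = b p + (p \in D).
Proof.
move=> p0; rewrite /cumsum (bigD1 p) //= big_pred0 ?addn0 // => i.
by rewrite -val_eqE /= p0 leqn0 andbN.
Qed.

Lemma cumsum_prev n (D : {set 'I_n}) b (p : 'I_n) :
  0 < p -> cumsum D b p = cumsum D b (prev_ord p) + (b p + (p \in D)).
Proof.
move=> p_gt0; rewrite /cumsum (bigD1 p) //= addnC; congr (_ + _).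
by apply: eq_bigl => i; rewrite -val_eqE /=; lia.
Qed.

Lemma gaps_cumsum n (D : {set 'I_n}) b : gaps D (cumsum D b) =1 b.
Proof.
move=> p; rewrite /gaps; case: (posnP p) => [p0|p_gt0].
  by rewrite /= cumsum_first // subn0 addnK.
by rewrite /= cumsum_prev // addKn addnK.
Qed.

Lemma ascending_cumsum n (D : {set 'I_n}) b : ascending D (cumsum D b).
Proof.
apply/forallP => p; apply/implyP => p_gt0.
by rewrite (cumsum_prev _ _ p_gt0) leq_add2l leq_addl.
Qed.

Lemma cumsum_gaps n (D : {set 'I_n}) a :
  (forall i : 'I_n, i \in D -> 0 < i) -> ascending D a -> cumsum D (gaps D a) =1 a.
Proof.
move=> D_pos /forallP a_asc p; move: {2}(val p) (erefl (val p)) => k.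
elim: k p => [|k IHk] p p_k.
  have pD : (p \in D) = false by apply/negP => /D_pos; rewrite p_k.
  by rewrite cumsum_first // /gaps p_k pD /= !subn0 addn0.
have p_gt0 : 0 < p by rewrite p_k.
rewrite cumsum_prev // IHk /=; last by rewrite p_k.
have := implyP (a_asc p) p_gt0; rewrite /gaps p_gt0.
by move: (a _) (a _) (nat_of_bool _) => x y z; lia.
Qed.

Lemma sum_geq_ord n (i : 'I_n) : \sum_(p < n) (i <= p) = n - i.
Proof.
rewrite -(big_mkord xpredT (fun p => nat_of_bool (i <= p))).
rewrite (big_cat_nat (n := i)) //= ?(ltnW (ltn_ord i)) //.
rewrite big_nat_cond big1 => [|p /andP [/andP [_ lt_p_i] _]]; last first.
  by rewrite leqNgt lt_p_i.
rewrite big_nat_cond (eq_bigr (fun _ => 1)) => [|p /andP [/andP [-> _] _] //].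
by rewrite -big_nat_cond sum_nat_const_nat muln1.
Qed.

Lemma sum_cumsum n (D : {set 'I_n}) b :
  \sum_p cumsum D b p = \sum_(i < n) (n - i) * b i + cD D.
Proof.
transitivity (\sum_(i < n) \sum_(p < n) (i <= p) * (b i + (i \in D))).
  rewrite exchange_big; apply: eq_bigr => p _; rewrite /cumsum big_mkcond.
  by apply: eq_bigr => i _; case: (i <= p); rewrite ?mul1n ?mul0n.
under eq_bigr => i _ do rewrite -big_distrl /= sum_geq_ord mulnDr.
rewrite big_split /=; congr (_ + _); rewrite /cD [RHS]big_mkcond /=.
by apply: eq_bigr => i _; case: (i \in D); rewrite ?muln1 ?muln0.
Qed.

Lemma ascending_count_weighted n (D : {set 'I_n}) K :
  (forall i : 'I_n, i \in D -> 0 < i) ->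
  ascending_count D K = card_box K (fun b => \sum_(i : 'I_n) (n - i) * b i + cD D == K).
Proof.
move=> D_pos; have sum_cumsum_gaps a : ascending D a ->
    \sum_(i : 'I_n) (n - i) * gaps D a i + cD D = \sum_i a i.
  by move=> a_asc; rewrite -sum_cumsum; apply: eq_bigr => p _; rewrite cumsum_gaps.
apply: (card_box_bij (f := gaps D) (g := cumsum D)).
- move=> a a_le /andP [a_asc sum_a]; rewrite sum_cumsum_gaps //; split=> // i.
  by rewrite /gaps -subnDA (leq_trans (leq_subr _ _)).
- move=> b _ /eqP sum_b; rewrite ascending_cumsum sum_cumsum sum_b eqxx.
  by split=> // i; rewrite -sum_b -sum_cumsum (leq_term_sum (cumsum D b)).
- by move=> a _ /andP [a_asc _]; apply: functional_extensionality; exact: cumsum_gaps.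
- by move=> b _ _; apply: functional_extensionality; exact: gaps_cumsum.
Qed.

Definition partition_poly n B : {poly int} :=
  (\prod_(i < n) \sum_(t < B.+1) 'X^((n - i) * t))%R.

Lemma coef_partition_poly n B j :
  ((partition_poly n B)`_j =
   (card_box B (fun b => \sum_(i : 'I_n) (n - i) * b i == j)%N)%:Z)%R.
Proof.
rewrite /partition_poly bigA_distr_bigA /= coef_sum.
under eq_bigr do rewrite prodrXr coefXn.
rewrite /card_box -sum1_card -natz natr_sum [in RHS]big_mkcond /=.
by apply: eq_bigr => f _; rewrite inE eq_sym; case: (_ == _).
Qed.

Lemma qpoch_partition_poly n B :
  (qpoch n * partition_poly n B = \prod_(i < n) (1 - 'X^((n - i) * B.+1)))%R.
Proof.
rewrite /qpoch /partition_poly (reindex_inj rev_ord_inj) -big_split /=.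
apply: eq_bigr => i _; rewrite (_ : (n - i.+1).+1 = n - i); last by have := ltn_ord i; lia.
have := subrXX (1 : {poly int}) ('X^(n - i)) B.+1; rewrite expr1n -exprM mulnC => ->.
by congr (_ * _)%R; apply: eq_bigr => t _; rewrite expr1n mul1r -exprM.
Qed.

Lemma coef_prod_1subXn (R : nzRingType) n (F : 'I_n -> nat) j :
  (forall i, j < F i) -> ((\prod_(i < n) (1 - 'X^(F i)) : {poly R})`_j = (j == 0)%:R)%R.
Proof.
move=> lt_j_F; elim/big_rec: _ => [|i p _ IHp]; first by rewrite coef1.
by rewrite mulrBl mul1r coefB coefXnM lt_j_F subr0.
Qed.

Lemma ascending_count_coef n (D : {set 'I_n}) K B :
  (forall i : 'I_n, i \in D -> 0 < i) -> K <= B ->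
  ((ascending_count D K)%:Z = ('X^(cD D) * partition_poly n B)`_K)%R.
Proof.
move=> D_pos le_K_B; rewrite coefXnM ascending_count_weighted //.
case: ltnP => [lt_K_cD|le_cD_K].
  by congr Posz; apply: eq_card0 => b; rewrite !inE; apply/negbTE; lia.
rewrite coef_partition_poly (card_box_widen le_K_B); last first.
  move=> b /eqP wt_b i; have := leq_term_sum (fun i : 'I_n => (n - i) * b i) i.
  by rewrite wt_b; have := ltn_ord i; nia.
by congr Posz; apply: eq_card => b; rewrite !inE; apply/eqP/eqP; lia.
Qed.

Lemma qpoch_ascending_count n (D : {set 'I_n}) k :
  (forall i : 'I_n, i \in D -> 0 < i) ->
  (\sum_(m < k.+1) (qpoch n)`_m * (ascending_count D (k - m))%:Z = (k == cD D)%:R)%R.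
Proof.
move=> D_pos; transitivity ((qpoch n * ('X^(cD D) * partition_poly n k))`_k)%R.
  rewrite coefM; apply: eq_bigr => m _.
  by rewrite (ascending_count_coef (B := k)) ?leq_subr.
rewrite mulrCA qpoch_partition_poly coefXnM; case: ltnP => [lt_k_cD|le_cD_k].
  by rewrite ltn_eqF.
rewrite coef_prod_1subXn => [|i]; last by have := ltn_ord i; nia.
by rewrite subn_eq0 eqn_leq le_cD_k andbT.
Qed.

Theorem proposition4 (n r : nat) (R D : {set 'I_n}) (sigma : {perm 'I_n}) :
  (1 <= n)%N -> (1 <= r)%N ->
  (forall i : 'I_n, i \in R -> (0 < i)%N) ->
  (forall i : 'I_n, i \in D -> (0 < i)%N) ->
  forall e : nat -> nat,
    mul_poly_var r (qpoch n)
      (gf r r (fun Z => reading_perm_is R Z sigma && (Des R (Zdrop2 Z) sigma == D))) e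
    =
    mul_mono_var r (cD D)
      (gf r (r - 1) (fun S => Des R S sigma == D)) e.
Proof.
move=> _ r_gt0 _ D_pos e; case: r r_gt0 => [//|r'] _; rewrite subn1 /=.
set G := gf r' r' (fun S => Des R S sigma == D) e.
have gf_upd c : gf r'.+1 r'.+1
    (fun Z => reading_perm_is R Z sigma && (Des R (Zdrop2 Z) sigma == D)) (upd e r'.+1 c) =
    ((ascending_count D c)%:Z * G)%R.
  rewrite (eq_gf _ (P' := fun Z => ascending D (fun p => head 0 (Z (sigma p))) &&
                                   (Des R (Zdrop2 Z) sigma == D))); last first.
    exact: reading_perm_Des.
  rewrite (gf_split_head _ (fun x => ascending D (fun p => x (sigma p)))
                           (fun S => Des R S sigma == D)).
  by rewrite ascending_count_perm.
rewrite /mul_poly_var /mul_mono_var; under eq_bigr do rewrite gf_upd mulrA.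
rewrite -big_distrl /= qpoch_ascending_count // gf_extra_var -/G.
case: (ltngtP (cD D) (e r'.+1)) => [lt_cD_k|lt_k_cD|<-]; rewrite ?subnn ?eqxx ?mul1r //.
by rewrite mul0r subn_eq0 leqNgt lt_cD_k.
Qed.
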